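(* Let $n\ge 0$ and let $\alpha$ be a word of length $2^n$ over $\{0,1\}$. If $i_1^{(n)}i_2^{(n)}\alpha\in\mathcal{L}^*(E_{\mathbb{Z}})$ or $\alpha\, i_1^{(n)}i_2^{(n)}\in\mathcal{L}^*(E_{\mathbb{Z}})$ for some $i_1,i_2\in\{0,1\}$, then $\alpha=i^{(n)}$ for some $i\in\{0,1\}$.
   Context: The two-sided Thue--Morse sequence $\omega=(\omega_k)_{k\in\mathbb{Z}}$ over $\{0,1\}$ is defined by $\omega_0=0$, $\omega_{2^n+j}=1-\omega_j$ for $n\ge0$, $0\le j<2^n$, and $\omega_{-i}=\omega_{i-1}$ for $i\ge1$. $\mathcal{L}^*(E_{\mathbb{Z}})$ denotes the set of finite nonempty words $\omega_m\omega_{m+1}\cdots\omega_n$ ($m\le n$) occurring in $\omega$. Blocks $i^{(n)}$: $0^{(0)}=0$, $1^{(0)}=1$, and inductively $0^{(n)}=0^{(n-1)}1^{(n-1)}$, $1^{(n)}=1^{(n-1)}0^{(n-1)}$ (concatenation); $|i^{(n)}|=2^n$. *)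

(* Alphabet {0,1} encoded as bool: 0 = false, 1 = true. *)
From mathcomp Require Import all_boot all_order all_algebra.
Set Implicit Arguments. Unset Strict Implicit. Unset Printing Implicit Defensive.

(* One-sided Thue--Morse: omega_0 = 0, omega_(2^n + j) = 1 - omega_j (0 <= j < 2^n).
   For k > 0, write k = 2^n + j with n = trunc_log 2 k, so j = k - 2^n < 2^n.
   Fuel recursion (fuel >= k suffices since j < k). *)
Fixpoint tm_aux (fuel k : nat) : bool :=
  match fuel with
  | 0 => false
  | fuel'.+1 =>
      if k == 0 then false
      else ~~ tm_aux fuel' (k - 2 ^ trunc_log 2 k)
  end.

Definition tm (k : nat) : bool := tm_aux k k.

(* Two-sided Thue--Morse: omega_(-i) = omega_(i-1) for i >= 1.
   Negz n denotes -(n+1), hence omega_(Negz n) = omega_n. *)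
Definition omegaZ (z : int) : bool :=
  match z with
  | Posz n => tm n
  | Negz n => tm n
  end.

Definition inLstar (w : seq bool) : Prop :=
  w != [::] /\
  exists m : int, w = [seq omegaZ (m + (k%:Z))%R | k <- iota 0 (size w)].

Fixpoint block (n : nat) (i : bool) : seq bool :=
  match n with
  | 0 => [:: i]
  | n'.+1 => block n' i ++ block n' (~~ i)
  end.

Goal [seq tm k | k <- iota 0 16] =
  [:: false; true; true; false; true; false; false; true;
      true; false; false; true; false; true; true; false]. by []. Qed.
Goal block 2 false = [:: false; true; true; false]. by []. Qed.

From mathcomp Require Import all_boot all_order all_algebra zify.

Set Implicit Arguments.
Unset Strict Implicit.
Unset Printing Implicit Defensive.

(* The Thue--Morse word satisfies [tm (x * 2^n + j) = tm x (+) tm j] for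
   [j < 2^n], so the length-[2^n] factor starting at [q * 2^n] is the block
   [(tm q)^(n)].  Conversely two adjacent blocks of length [2^n] can only occur
   at a multiple of [2^n]: by halving it suffices to see that they cannot occur
   at an odd position, and an odd position would force three equal consecutive
   letters of [tm].  Hence a length-[2^n] word adjacent to two blocks sits at
   an aligned position and is itself a block.  The two-sided word reduces to
   [tm] because [omega_z = tm (6 * 4^e + z)] whenever [|z| < 4^e]. *)

Lemma tm_aux_fuel f1 f2 k : k <= f1 -> k <= f2 -> tm_aux f1 k = tm_aux f2 k.
Proof.
elim: f1 f2 k => [|f1 IH] [|f2] k /= k_f1 k_f2 //; try by have -> : k = 0 by lia.
case: (k =P 0) => // /eqP k_neq0.
have pos : 0 < 2 ^ trunc_log 2 k by rewrite expn_gt0.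
by congr negb; apply: IH; lia.
Qed.

Lemma tm_rec k : 0 < k -> tm k = ~~ tm (k - 2 ^ trunc_log 2 k).
Proof.
case: k => // k _; rewrite /tm /=; congr negb; apply: tm_aux_fuel => //.
have := expn_gt0 2 (trunc_log 2 k.+1); lia.
Qed.

Lemma tm_double_add h (b : bool) : tm (h.*2 + b) = tm h (+) b.
Proof.
elim: h {-2}h (leqnn h) b => [|N IH] h le_hN b.
  by move: le_hN; rewrite leqn0 => /eqP ->; case: b.
have [->|h_gt0] := posnP h; first by case: b.
have log_hb : trunc_log 2 (h.*2 + b) = (trunc_log 2 h).+1.
  by rewrite trunc_log2S; [rewrite addnC half_bit_double | lia].
rewrite (@tm_rec (h.*2 + b)) ?log_hb; last lia.
have lt_h := trunc_logP (isT : 1 < 2) h_gt0.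
have -> : h.*2 + b - 2 ^ (trunc_log 2 h).+1 = (h - 2 ^ trunc_log 2 h).*2 + b.
  by rewrite expnS; lia.
by rewrite IH; [rewrite [tm h]tm_rec // addNb | lia].
Qed.

Lemma tm_double h : tm h.*2 = tm h.
Proof. by rewrite -[h.*2]addn0 (tm_double_add h false) addbF. Qed.

Lemma tm_double_addn1 h : tm (h.*2).+1 = ~~ tm h.
Proof. by rewrite -addn1 (tm_double_add h true) addbT. Qed.

Lemma tm_mul_exp2_add x n j : j < 2 ^ n -> tm (x * 2 ^ n + j) = tm x (+) tm j.
Proof.
elim: n x j => [|n IH] x j.
  by rewrite expn0 ltnS leqn0 muln1 => /eqP ->; rewrite addn0 addbF.
rewrite expnS => lt_j; have j_eq := odd_double_half j.
have -> : x * (2 * 2 ^ n) + j = (x * 2 ^ n + j./2).*2 + odd j by lia.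
rewrite tm_double_add IH; last lia.
by rewrite -addbA -(tm_double_add j./2) addnC j_eq.
Qed.

Lemma tm_exp2_sub n a : a < 2 ^ n -> tm (2 ^ n - 1 - a) = tm a (+) odd n.
Proof.
elim: n a => [|n IH] a; first by rewrite expn0 ltnS leqn0 => /eqP ->.
rewrite expnS => lt_a; have a_eq := odd_double_half a.
have -> : 2 * 2 ^ n - 1 - a = (2 ^ n - 1 - a./2).*2 + ~~ odd a.
  by case: (odd a) a_eq => /= a_eq; lia.
rewrite tm_double_add IH; last lia.
have -> : tm a = tm a./2 (+) odd a by rewrite -tm_double_add addnC a_eq.
by rewrite /=; case: (odd a); case: (tm _); case: (odd n).
Qed.

Lemma tm_triple_free x : tm x = tm x.+1 -> tm x.+1 = tm x.+2 -> False.
Proof.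
have := odd_double_half x; set h := x./2; case: (odd x) => /= x_eq.
  have -> : x.+2 = h.+1.*2.+1 by lia.
  have -> : x.+1 = h.+1.*2 by lia.
  by rewrite tm_double tm_double_addn1 => _; case: (tm _).
by rewrite -x_eq tm_double tm_double_addn1; case: (tm _).
Qed.

Lemma tm_alternating_pairs_even x :
  tm x.+1 = ~~ tm x -> tm x.+3 = ~~ tm x.+2 -> ~~ odd x.
Proof.
have := odd_double_half x; set h := x./2; case: (odd x) => //= x_eq pair1 pair2.
have [E0 E1 E2 E3] : [/\ x = h.*2.+1, x.+1 = h.+1.*2, x.+2 = h.+1.*2.+1 & x.+3 = h.+2.*2].
  by split; lia.
rewrite E1 E0 tm_double tm_double_addn1 in pair1.
rewrite E3 E2 tm_double tm_double_addn1 negbK in pair2.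
by rewrite negbK in pair1; case: (tm_triple_free (esym pair1) (esym pair2)).
Qed.

Definition tm_block_at n (i : bool) m := forall j, j < 2 ^ n -> tm (m + j) = i (+) tm j.

Lemma tm_block_at_pair n i m p :
  tm_block_at n.+1 i m -> p < 2 ^ n -> tm (m + p.*2).+1 = ~~ tm (m + p.*2).
Proof.
move=> blk lt_p; rewrite -addnS !blk ?expnS; try lia.
by rewrite tm_double tm_double_addn1 addbN.
Qed.

Lemma tm_block_at_half n i h : tm_block_at n.+1 i h.*2 -> tm_block_at n i h.
Proof.
move=> blk j lt_j; rewrite -tm_double -(tm_double j) doubleD blk //.
by rewrite expnS; lia.
Qed.

Lemma tm_blocks_aligned n i1 i2 m :
  tm_block_at n i1 m -> tm_block_at n i2 (m + 2 ^ n) -> 2 ^ n %| m.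
Proof.
elim: n i1 i2 m => [|n IH] i1 i2 m blk1 blk2; first by rewrite dvd1n.
have pos : 0 < 2 ^ n by rewrite expn_gt0.
have m_even : ~~ odd m.
  (* the last letter pair of the first block and the first pair of the second *)
  set m' := m + (2 ^ n).-1.*2.
  have pair1 : tm m'.+1 = ~~ tm m' by apply: tm_block_at_pair blk1 _; lia.
  have pair2 : tm m'.+3 = ~~ tm m'.+2.
    have -> : m'.+2 = m + 2 ^ n.+1 + 0.*2 by rewrite expnS /m'; lia.
    by apply: tm_block_at_pair blk2 _.
  by have := tm_alternating_pairs_even pair1 pair2; rewrite oddD odd_double addbF.
have m_eq : m = m./2.*2 by have := odd_double_half m; rewrite (negbTE m_even).
rewrite m_eq -mul2n expnS dvdn_pmul2l //; apply: (IH i1 i2).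
  by apply: tm_block_at_half; rewrite -m_eq.
by apply: tm_block_at_half; rewrite doubleD -m_eq -mul2n -expnS.
Qed.

Definition tm_factor M (w : seq bool) := w = [seq tm (M + k) | k <- iota 0 (size w)].

Lemma tm_factor_cat M u v :
  tm_factor M (u ++ v) <-> tm_factor M u /\ tm_factor (M + size u) v.
Proof.
rewrite /tm_factor size_cat iotaD add0n -[size u]addn0 iotaDl map_cat -map_comp addn0.
have -> : [seq ((fun k => tm (M + k)) \o addn (size u)) k | k <- iota 0 (size v)]
        = [seq tm (M + size u + k) | k <- iota 0 (size v)].
  by apply: eq_map => k; rewrite /= addnA.
split; last by case=> <- <-.
by move/eqP; rewrite eqseq_cat ?size_map ?size_iota // => /andP[/eqP ? /eqP ?].
Qed.

Lemma tm_factor_uniq M u v : size u = size v -> tm_factor M u -> tm_factor M v -> u = v.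
Proof. by move=> eq_size -> ->; rewrite eq_size. Qed.

Lemma block_map n i : block n i = [seq i (+) tm j | j <- iota 0 (2 ^ n)].
Proof.
elim: n i => [|n IH] i /=; first by rewrite addbF.
rewrite !IH expnS mul2n -addnn iotaD map_cat add0n; congr (_ ++ _).
rewrite -[2 ^ n]addn0 iotaDl -map_comp addn0; apply/eq_in_map => j.
rewrite mem_iota add0n /= => lt_j.
by rewrite -[2 ^ n]mul1n tm_mul_exp2_add //= addNb addbN.
Qed.

Lemma size_block n i : size (block n i) = 2 ^ n.
Proof. by rewrite block_map size_map size_iota. Qed.

Lemma tm_factor_blockE n i m : tm_factor m (block n i) <-> tm_block_at n i m.
Proof.
rewrite /tm_factor size_block block_map -eq_in_map.
split=> blk j; last by rewrite mem_iota add0n /= => /blk.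
by move=> lt_j; rewrite blk // mem_iota.
Qed.

Lemma tm_factor_block n q : tm_factor (q * 2 ^ n) (block n (tm q)).
Proof. by apply/tm_factor_blockE => j lt_j; rewrite tm_mul_exp2_add. Qed.

Lemma omegaZ_shift e (z : int) :
  (`|z| < 4 ^ e)%N -> omegaZ z = tm `|((6 * 4 ^ e)%:Z + z)%R|%N.
Proof.
have E : 4 ^ e = 2 ^ (2 * e) by rewrite expnM.
case: z => a /= lt_a.
  rewrite E tm_mul_exp2_add; last by rewrite -E.
  by case: (tm a).
have -> : `|((6 * 4 ^ e)%:Z + Negz a)%R|%N = 5 * 2 ^ (2 * e) + (2 ^ (2 * e) - 1 - a).
  by rewrite NegzE in lt_a *; lia.
rewrite tm_mul_exp2_add ?tm_exp2_sub; try lia.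
by rewrite oddM /=; case: (tm a).
Qed.

Lemma inLstar_tm_factor w : inLstar w -> exists M, tm_factor M w.
Proof.
case=> _ [m w_eq]; set e := (`|m| + size w)%N.
have lt_e : e < 4 ^ e by apply: ltn_expl.
exists `|((6 * 4 ^ e)%:Z + m)%R|%N; rewrite /tm_factor {1}w_eq.
apply/eq_in_map => k; rewrite mem_iota add0n /= => lt_k.
rewrite (omegaZ_shift (e := e)); last lia.
by congr tm; lia.
Qed.

Lemma tm_factor_aligned n q w :
  size w = 2 ^ n -> tm_factor (q * 2 ^ n) w -> w = block n (tm q).
Proof.
by move=> size_w /tm_factor_uniq; apply; [rewrite size_block | apply: tm_factor_block].
Qed.

Theorem lemma3p3 (n : nat) (alpha : seq bool) :
  size alpha = 2 ^ n ->
  (exists i1 i2 : bool,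
      inLstar (block n i1 ++ block n i2 ++ alpha) \/
      inLstar (alpha ++ block n i1 ++ block n i2)) ->
  exists i : bool, alpha = block n i.
Proof.
move=> size_alpha [i1 [i2 [/inLstar_tm_factor [M fac] | /inLstar_tm_factor [M fac]]]].
- move: fac; rewrite !tm_factor_cat !size_block !tm_factor_blockE.
  case=> blk1 [blk2 fac_alpha].
  have /dvdnP [q M_eq] := tm_blocks_aligned blk1 blk2.
  exists (tm q.+2); apply: tm_factor_aligned => //.
  by rewrite M_eq -addnA addnn -mul2n -mulnDl addn2 in fac_alpha.
- move: fac; rewrite !tm_factor_cat size_alpha size_block !tm_factor_blockE.
  case=> fac_alpha [blk1 blk2].
  have /dvdnP [q M_eq] : 2 ^ n %| M.
    by rewrite -(dvdn_addl _ (dvdnn (2 ^ n))); apply: tm_blocks_aligned blk1 blk2.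
  by exists (tm q); apply: tm_factor_aligned => //; rewrite -M_eq.
Qed.
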